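(* Let $\pi$ be a probability density on a state space $\Omega$. Let $\{P(\cdot,\cdot;\zeta)\}$ be a family of Markov transition densities indexed by a stochastic sample $\zeta$, where $\zeta$ is drawn from a known fixed distribution, and fix $T\ge1$. Consider the chain that, from state $x$, sets $x_0=x$, and for $t=0,\dots,T-1$ samples $\zeta_t$ independently from that distribution and then $x_{t+1}\sim P(x_t,\cdot\,;\zeta_t)$; it sets $y=x_T$, computes $\tau=\min\left(1,\ \frac{\pi(y)}{\pi(x)}\prod_{t=0}^{T-1}\frac{P(x_{t+1},x_t;\zeta_t)}{P(x_t,x_{t+1};\zeta_t)}\right),$ and moves to $y$ with probability $\tau$, otherwise stays at $x$. Then this chain is reversible with respect to $\pi$, i.e. $\pi(x)G(x,y)=\pi(y)G(y,x)$ for its transition kernel $G$, and in particular has stationary distribution $\pi$. *)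

From HB Require Import structures.
From mathcomp Require Import all_boot all_order all_algebra.
From mathcomp Require Import all_classical all_reals all_analysis.
Set Implicit Arguments. Unset Strict Implicit. Unset Printing Implicit Defensive.
Import Order.TTheory GRing.Theory Num.Theory.
Local Open Scope ring_scope.
Local Open Scope ereal_scope.

Section MultiStepMH.
Context {R : realType} {d1 d2 : measure_display}
  {Omega : measurableType d1} {Z : measurableType d2}
  (mu : {measure set Omega -> \bar R}) (nu : {measure set Z -> \bar R})
  (P : Omega -> Omega -> Z -> R).

(* path_int n h cur r : expectation over the remaining n steps of the chain
   (zeta_t ~ nu, then x_{t+1} ~ P(x_t, . ; zeta_t) w.r.t. mu) of h(x_n, r'),
   where r' is r multiplied by the ratios P(x_{t+1},x_t;zeta_t)/P(x_t,x_{t+1};zeta_t). *)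
Fixpoint path_int (n : nat) (h : Omega -> R -> \bar R) (cur : Omega) (r : R)
  : \bar R :=
  match n with
  | 0%N => h cur r
  | n'.+1 => \int[nu]_z \int[mu]_y
       ((P cur y z)%:E * path_int n' h y (r * (P y cur z / P cur y z))%R)
  end.

Definition mh_tau (pi : Omega -> R) (x y : Omega) (r : R) : R :=
  Num.min 1%R (pi y / pi x * r)%R.

Definition mh_kernel (pi : Omega -> R) (T : nat) (x : Omega) (B : set Omega)
  : \bar R :=
  path_int T (fun y r => (mh_tau pi x y r * \1_B y
                          + (1 - mh_tau pi x y r) * \1_B x)%R%:E) x 1%R.

End MultiStepMH.

(* Detailed balance is proved on path space.  A proposal path
   x = x_0, ..., x_T = y with samples z_0, ..., z_(T-1) is integrated against
   the reference measure (mu for every state, nu for every sample) and carries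
   two weights: the forward weight a = prod_t P(x_t, x_(t+1); z_t), which is
   the density of its law, and the backward weight
   b = prod_t P(x_(t+1), x_t; z_t), so that the acceptance probability is
   min(1, pi(y) b / (pi(x) a)).  As the z_t are i.i.d., reversing the path
   together with the order of its samples preserves the reference measure and
   exchanges a and b (Tonelli, by induction on T).  The accepted flow
   pi(x) a min(1, pi(y) b / (pi(x) a)) = min(pi(x) a, pi(y) b) is invariant
   under this reversal, while the rejected mass stays at x and is trivially
   symmetric.  Stationarity is detailed balance against the whole space, the
   kernel having total mass 1. *)

From HB Require Import structures.
From mathcomp Require Import all_boot all_order all_algebra.
From mathcomp Require Import all_classical all_reals all_analysis.
From mathcomp Require Import measurable_realfun ring.
Set Implicit Arguments.
Unset Strict Implicit.
Unset Printing Implicit Defensive.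

Import Order.TTheory GRing.Theory Num.Theory.
Local Open Scope ring_scope.
Local Open Scope classical_set_scope.

Lemma measurable_inv (R : realType) : measurable_fun setT (@GRing.inv R).
Proof.
have -> : [set: R] = [set 0] `|` [set r | r != 0].
  by apply/seteqP; split => x // _; case: (eqVneq x 0) => [->|x0]; [left|right].
have mN0 : measurable [set r : R | r != 0].
  rewrite (_ : [set r | r != 0] = ~` [set 0]); first exact: measurableC.
  by apply/seteqP; split => x /= /eqP.
apply/measurable_funU => //; split.
- apply: (@eq_measurable_fun _ _ _ _ _ (cst (0 : R))); last exact: measurable_cst.
  by move=> x; rewrite inE /= => ->; rewrite invr0.
- apply: open_continuous_measurable_fun; first exact: open_neq.
  by move=> x; rewrite inE /= => x0; exact: inv_continuous.
Qed.

Lemma mul_min1_ratio (R : realFieldType) (p q a b : R) :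
  0 <= p -> 0 <= q -> 0 <= a -> 0 <= b ->
  p * a * Num.min 1 (q / p * (b / a)) = Num.min (p * a) (q * b).
Proof.
move=> p0 q0 a0 b0; rewrite minr_pMr ?mulr_ge0 // mulr1.
have [->|pa0] := eqVneq (p * a) 0; first by rewrite mul0r minxx min_l // mulr_ge0.
congr Num.min; move: pa0; rewrite mulf_eq0 negb_or => /andP[p_neq0 a_neq0].
by rewrite mulrACA (mulrCA p) (mulrCA a) !mulfV // !mulr1.
Qed.

Lemma mh_tau_balance (R : realType) d (Omega : measurableType d) (pi : Omega -> R)
    x y (a b : R) :
  0 <= pi x -> 0 <= pi y -> 0 <= a -> 0 <= b ->
  pi x * a * mh_tau pi x y (b / a) = pi y * b * mh_tau pi y x (a / b).
Proof. by move=> *; rewrite /mh_tau !mul_min1_ratio // minC. Qed.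

Section SigmaFiniteMeasures.
Local Open Scope ereal_scope.
Context (R : realType) (d d' : measure_display)
  (X : measurableType d) (Y : measurableType d').

Definition sigma_finite_measure_of (mu : {measure set X -> \bar R})
    (mu_sf : sigma_finite setT mu) : {sigma_finite_measure set X -> \bar R} :=
  HB.pack_for {sigma_finite_measure set X -> \bar R} (Measure.sort mu)
    (Measure.class mu) (isSFinite.Build _ _ _ mu (sfinite_measure_sigma_finite mu_sf))
    (isSigmaFinite.Build _ _ _ mu mu_sf).

Lemma measurable_param_integral (m : {sigma_finite_measure set Y -> \bar R})
    (f : X -> Y -> \bar R) :
  measurable_fun setT (fun p => f p.1 p.2) -> (forall x y, 0 <= f x y) ->
  measurable_fun setT (fun x => \int[m]_y f x y).
Proof.
move=> mf f0.
exact: (measurable_fun_fubini_tonelli_F (fun p => f p.1 p.2) mf (fun p => f0 _ _)).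
Qed.

Lemma fubini_tonelli_curry (m1 : {sigma_finite_measure set X -> \bar R})
    (m2 : {sigma_finite_measure set Y -> \bar R}) (f : X -> Y -> \bar R) :
  measurable_fun setT (fun p => f p.1 p.2) -> (forall x y, 0 <= f x y) ->
  \int[m1]_x \int[m2]_y f x y = \int[m2]_y \int[m1]_x f x y.
Proof.
move=> mf f0.
exact: (fubini_tonelli (fun p => f p.1 p.2) mf (fun p => f0 _ _)).
Qed.

End SigmaFiniteMeasures.

Section ForwardBackwardPathIntegral.
Local Open Scope ereal_scope.
Variables (R : realType) (d1 d2 : measure_display)
  (Omega : measurableType d1) (Z : measurableType d2).
Variables (mu : {sigma_finite_measure set Omega -> \bar R})
  (nu : {sigma_finite_measure set Z -> \bar R}).
Variable P : Omega -> Omega -> Z -> R.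
Hypothesis measurable_P :
  measurable_fun setT (fun p : Omega * Omega * Z => P p.1.1 p.1.2 p.2).
Hypothesis P_ge0 : forall x y z, (0 <= P x y z)%R.

Lemma measurable_P_comp d (T : measurableType d) (f1 f2 : T -> Omega) (f3 : T -> Z) :
  measurable_fun setT f1 -> measurable_fun setT f2 -> measurable_fun setT f3 ->
  measurable_fun setT (fun w => P (f1 w) (f2 w) (f3 w)).
Proof.
move=> m1 m2 m3.
exact: measurableT_comp measurable_P (measurable_fun_pair (measurable_fun_pair m1 m2) m3).
Qed.

Ltac measurable_tac := repeat first
  [ exact: measurable_fst | exact: measurable_snd | exact: measurable_id
  | exact: measurable_cst | apply: measurable_fun_pair
  | apply: (measurableT_comp measurable_fst)
  | apply: (measurableT_comp measurable_snd)
  | apply: measurable_funM | apply: measurable_funB | apply: measurable_P_comp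
  | apply: (measurableT_comp (@measurable_inv R))
  | apply: (measurableT_comp (@normr_measurable _ setT)) ].

Fixpoint fbpath_int (n : nat) (g : Omega -> R -> R -> \bar R) (x : Omega) (a b : R)
    : \bar R :=
  if n is n'.+1 then
    \int[nu]_z \int[mu]_y fbpath_int n' g y (a * P x y z)%R (b * P y x z)%R
  else g x a b.

Definition fbstep (g : Omega -> R -> R -> \bar R) (x : Omega) (a b : R) : \bar R :=
  \int[nu]_z \int[mu]_y g y (a * P x y z)%R (b * P y x z)%R.

Definition measurable_uncurry3 (g : Omega -> R -> R -> \bar R) :=
  measurable_fun setT (fun p : Omega * R * R => g p.1.1 p.1.2 p.2).

Definition measurable_uncurry4 d (U : measurableType d)
    (H : U -> Omega -> R -> R -> \bar R) :=
  measurable_fun setT (fun p : U * Omega * R * R => H p.1.1.1 p.1.1.2 p.1.2 p.2).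

Lemma measurable_uncurry4_comp d (U : measurableType d) (H : U -> Omega -> R -> R -> \bar R)
    d' (V : measurableType d') (fu : V -> U) (fx : V -> Omega) (fa fb : V -> R) :
  measurable_uncurry4 H ->
  measurable_fun setT fu -> measurable_fun setT fx ->
  measurable_fun setT fa -> measurable_fun setT fb ->
  measurable_fun setT (fun v => H (fu v) (fx v) (fa v) (fb v)).
Proof.
move=> mH mfu mx ma mb.
exact: measurableT_comp mH
  (measurable_fun_pair (measurable_fun_pair (measurable_fun_pair mfu mx) ma) mb).
Qed.

Lemma measurable_uncurry3_comp (g : Omega -> R -> R -> \bar R)
    d' (V : measurableType d') (fx : V -> Omega) (fa fb : V -> R) :
  measurable_uncurry3 g ->
  measurable_fun setT fx -> measurable_fun setT fa -> measurable_fun setT fb ->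
  measurable_fun setT (fun v => g (fx v) (fa v) (fb v)).
Proof.
move=> mg mx ma mb.
exact: measurableT_comp mg (measurable_fun_pair (measurable_fun_pair mx ma) mb).
Qed.

Lemma measurable_uncurry4_at d (U : measurableType d)
    (H : U -> Omega -> R -> R -> \bar R) u :
  measurable_uncurry4 H -> measurable_uncurry3 (H u).
Proof.
by move=> mH; apply: (measurable_uncurry4_comp (fu := cst u) mH); measurable_tac.
Qed.

Lemma fbpath_int_ge0 n g : (forall y a b, 0 <= g y a b) ->
  forall x a b, 0 <= fbpath_int n g x a b.
Proof.
move=> g0; elim: n => [|n IH] x a b //=.
by apply: integral_ge0 => z _; apply: integral_ge0.
Qed.

Lemma fbpath_int_fwd0 n g : (forall y b, g y 0%R b = 0) ->
  forall x b, fbpath_int n g x 0 b = 0.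
Proof.
move=> g0; elim: n => [|n IH] x b /=; first exact: g0.
by apply: integral0_eq => z _; apply: integral0_eq => y _; rewrite mul0r IH.
Qed.

Lemma eq_fbpath_int n g1 g2 :
  (forall y a b, (0 <= a)%R -> (0 <= b)%R -> g1 y a b = g2 y a b) ->
  forall x a b, (0 <= a)%R -> (0 <= b)%R ->
  fbpath_int n g1 x a b = fbpath_int n g2 x a b.
Proof.
move=> g12; elim: n => [|n IH] x a b a0 b0 /=; first exact: g12.
by apply: eq_integral => z _; apply: eq_integral => y _; apply: IH; apply: mulr_ge0.
Qed.

Lemma fbpath_int_scale n g x (a b c e : R) :
  fbpath_int n g x (a * c) (b * e) =
  fbpath_int n (fun y a' b' => g y (a' * c)%R (b' * e)%R) x a b.
Proof.
elim: n x a b => [//|n IH] x a b /=.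
apply: eq_integral => z _; apply: eq_integral => y _.
by rewrite mulrAC [(b * e * _)%R]mulrAC IH.
Qed.

Lemma fbpath_intS n g x a b :
  fbpath_int n.+1 g x a b = fbpath_int n (fbstep g) x a b.
Proof.
elim: n x a b => [//|n IH] x a b /=.
by apply: eq_integral => z _; apply: eq_integral => y _; rewrite -IH.
Qed.

Lemma measurable_fbpath_int n d (U : measurableType d)
    (H : U -> Omega -> R -> R -> \bar R) :
  measurable_uncurry4 H -> (forall u y a b, 0 <= H u y a b) ->
  measurable_uncurry4 (fun u => fbpath_int n (H u)).
Proof.
move=> mH H0; elim: n => [|n IH] //=; rewrite /measurable_uncurry4 /=.
apply: measurable_param_integral; last first.
  by move=> q z; apply: integral_ge0 => y _; apply: fbpath_int_ge0.
apply: measurable_param_integral; last by move=> q y; apply: fbpath_int_ge0.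
by apply: (measurable_uncurry4_comp IH); measurable_tac.
Qed.

Lemma measurable_fbpath_int3 n g : measurable_uncurry3 g ->
  (forall y a b, 0 <= g y a b) -> measurable_uncurry3 (fbpath_int n g).
Proof.
move=> mg g0.
have mH : measurable_uncurry4 (fun _ : Omega => g).
  by apply: (measurable_uncurry3_comp mg); measurable_tac.
apply: (measurable_uncurry4_comp (fu := fun p => p.1.1)
  (measurable_fbpath_int n mH (fun _ => g0))); measurable_tac.
Qed.

Lemma integral_fbpath_int n d (U : measurableType d)
    (m : {sigma_finite_measure set U -> \bar R}) (H : U -> Omega -> R -> R -> \bar R) :
  measurable_uncurry4 H -> (forall u y a b, 0 <= H u y a b) ->
  forall x a b, \int[m]_u fbpath_int n (H u) x a b =
                fbpath_int n (fun y a b => \int[m]_u H u y a b) x a b.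
Proof.
move=> mH H0; elim: n => [//|n IH] x a b /=.
have mQ := measurable_fbpath_int n mH H0.
have Q0 u y a' b' : 0 <= fbpath_int n (H u) y a' b' by exact: fbpath_int_ge0.
rewrite fubini_tonelli_curry; last 2 first.
- apply: measurable_param_integral => [|? ?]; last exact: Q0.
  by apply: (measurable_uncurry4_comp mQ); measurable_tac.
- by move=> u z; apply: integral_ge0.
apply: eq_integral => z _; rewrite fubini_tonelli_curry //; last first.
  by apply: (measurable_uncurry4_comp mQ); measurable_tac.
by apply: eq_integral => y _; exact: IH.
Qed.

Lemma integral_fbpath_int_first n (g : Omega -> Omega -> R -> R -> \bar R) :
  measurable_uncurry4 g -> (forall x y a b, 0 <= g x y a b) ->
  \int[mu]_x fbpath_int n.+1 (g x) x 1 1 =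
  \int[nu]_z \int[mu]_y fbpath_int n
     (fun w a b => \int[mu]_x g x w (a * P x y z)%R (b * P y x z)%R) y 1 1.
Proof.
move=> mg g0; have mQ := measurable_fbpath_int n mg g0.
have Q0 x y a b : 0 <= fbpath_int n (g x) y a b by exact: fbpath_int_ge0.
rewrite /= fubini_tonelli_curry; last 2 first.
- apply: measurable_param_integral => [|? ?]; last exact: Q0.
  by apply: (measurable_uncurry4_comp mQ); measurable_tac.
- by move=> x z; apply: integral_ge0.
apply: eq_integral => z _; rewrite fubini_tonelli_curry //; last first.
  by apply: (measurable_uncurry4_comp mQ); measurable_tac.
apply: eq_integral => y _; under eq_integral do rewrite fbpath_int_scale.
apply: integral_fbpath_int => [|x w a b]; last exact: g0.
by apply: (measurable_uncurry4_comp mg); measurable_tac.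
Qed.

Lemma integral_fbpath_int_last n (k : Omega -> Omega -> R -> R -> \bar R) :
  measurable_uncurry4 k -> (forall w x a b, 0 <= k w x a b) ->
  \int[nu]_z \int[mu]_w fbpath_int n
     (fun y a b => \int[mu]_x k w x (a * P y x z)%R (b * P x y z)%R) w 1 1 =
  \int[mu]_w fbpath_int n.+1 (k w) w 1 1.
Proof.
move=> mk k0.
pose K (u : Z * Omega) y a b := \int[mu]_x k u.2 x (a * P y x u.1)%R (b * P x y u.1)%R.
have mK : measurable_uncurry4 K.
  apply: measurable_param_integral => [|? ?]; last exact: k0.
  by apply: (measurable_uncurry4_comp mk); measurable_tac.
have K0 u y a b : 0 <= K u y a b by apply: integral_ge0.
have mQ := measurable_fbpath_int n mK K0.
rewrite fubini_tonelli_curry; last 2 first.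
- by apply: (measurable_uncurry4_comp (fu := id) mQ); measurable_tac.
- by move=> z w; apply: fbpath_int_ge0 => *; apply: integral_ge0.
apply: eq_integral => w _; rewrite fbpath_intS.
apply: (integral_fbpath_int n nu (H := fun z => K (z, w))) => //.
by apply: (measurable_uncurry4_comp (fu := fun p => (p.1.1.1, w)) mK); measurable_tac.
Qed.

Lemma fbpath_int_rev n (g : Omega -> Omega -> R -> R -> \bar R) :
  measurable_uncurry4 g -> (forall x y a b, 0 <= g x y a b) ->
  \int[mu]_x fbpath_int n (g x) x 1 1 =
  \int[mu]_y fbpath_int n (fun x a b => g x y b a) y 1 1.
Proof.
elim: n g => [//|n IH] g mg g0.
rewrite integral_fbpath_int_first // -integral_fbpath_int_last; last 2 first.
- by apply: (measurable_uncurry4_comp mg); measurable_tac.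
- by move=> *; exact: g0.
apply: eq_integral => z _.
apply: (IH (fun y w a b => \int[mu]_x g x w (a * P x y z)%R (b * P y x z)%R)).
- apply: measurable_param_integral => [|? ?]; last exact: g0.
  by apply: (measurable_uncurry4_comp mg); measurable_tac.
- by move=> *; apply: integral_ge0.
Qed.

Lemma fbpath_intZ n g (c : R) :
  measurable_uncurry3 g -> (forall y a b, 0 <= g y a b) -> (0 <= c)%R ->
  forall x a b,
  fbpath_int n (fun y a b => c%:E * g y a b) x a b = c%:E * fbpath_int n g x a b.
Proof.
move=> mg g0 c0; elim: n => [//|n IH] x a b /=.
have mQ := measurable_fbpath_int3 n mg g0.
have Q0 y a' b' : 0 <= fbpath_int n g y a' b' by exact: fbpath_int_ge0.
transitivity (\int[nu]_z (c%:E *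
    \int[mu]_y fbpath_int n g y (a * P x y z)%R (b * P y x z)%R)).
  apply: eq_integral => z _; rewrite -ge0_integralZl_EFin //.
  - by apply: eq_integral => y _; rewrite IH.
  - by apply: (measurable_uncurry3_comp mQ); measurable_tac.
rewrite ge0_integralZl_EFin //.
- by move=> z _; apply: integral_ge0 => y _; exact: Q0.
- apply: measurable_param_integral => [|? ?]; last exact: Q0.
  by apply: (measurable_uncurry3_comp mQ); measurable_tac.
Qed.

Lemma fbpath_intD n g1 g2 :
  measurable_uncurry3 g1 -> (forall y a b, 0 <= g1 y a b) ->
  measurable_uncurry3 g2 -> (forall y a b, 0 <= g2 y a b) ->
  forall x a b, fbpath_int n (fun y a b => g1 y a b + g2 y a b) x a b =
                fbpath_int n g1 x a b + fbpath_int n g2 x a b.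
Proof.
move=> mg1 g10 mg2 g20; elim: n => [//|n IH] x a b /=.
have mQ1 := measurable_fbpath_int3 n mg1 g10.
have mQ2 := measurable_fbpath_int3 n mg2 g20.
have Q10 y a' b' : 0 <= fbpath_int n g1 y a' b' by exact: fbpath_int_ge0.
have Q20 y a' b' : 0 <= fbpath_int n g2 y a' b' by exact: fbpath_int_ge0.
transitivity (\int[nu]_z
  (\int[mu]_y fbpath_int n g1 y (a * P x y z)%R (b * P y x z)%R +
   \int[mu]_y fbpath_int n g2 y (a * P x y z)%R (b * P y x z)%R)).
  apply: eq_integral => z _; rewrite -ge0_integralD //.
  - by apply: eq_integral => y _; rewrite IH.
  - by apply: (measurable_uncurry3_comp mQ1); measurable_tac.
  - by apply: (measurable_uncurry3_comp mQ2); measurable_tac.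
rewrite ge0_integralD //.
- by move=> z _; apply: integral_ge0 => y _; exact: Q10.
- apply: measurable_param_integral => [|? ?]; last exact: Q10.
  by apply: (measurable_uncurry3_comp mQ1); measurable_tac.
- by move=> z _; apply: integral_ge0 => y _; exact: Q20.
- apply: measurable_param_integral => [|? ?]; last exact: Q20.
  by apply: (measurable_uncurry3_comp mQ2); measurable_tac.
Qed.

(* The absolute values only make [ratio_lift h] nonnegative for arbitrary real
   weights; it is only ever evaluated at nonnegative ones. *)
Definition ratio_lift (h : Omega -> R -> \bar R) (y : Omega) (a b : R) : \bar R :=
  (`|a|)%:E * h y `|b / a|%R.

Lemma ratio_lift_ge0 h : (forall y r, (0 <= r)%R -> 0 <= h y r) ->
  forall y a b, 0 <= ratio_lift h y a b.
Proof. by move=> h0 y a b; rewrite mule_ge0 ?lee_fin // h0. Qed.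

Lemma measurable_ratio_lift d (U : measurableType d) (h : U -> Omega -> R -> \bar R) :
  measurable_fun setT (fun p : U * Omega * R => h p.1.1 p.1.2 p.2) ->
  measurable_uncurry4 (fun u => ratio_lift (h u)).
Proof.
move=> mh; apply: emeasurable_funM; first by apply/measurable_EFinP; measurable_tac.
apply: (measurableT_comp mh
  (g := fun p : U * Omega * R * R => (p.1.1.1, p.1.1.2, `|p.2 / p.1.2|%R))).
by measurable_tac.
Qed.

Lemma fbpath_int_ratio_liftM n h x (a b c : R) :
  measurable_uncurry3 (ratio_lift h) -> (forall y r, (0 <= r)%R -> 0 <= h y r) ->
  (0 < c)%R ->
  fbpath_int n (ratio_lift h) x (a * c) (b * c) =
  c%:E * fbpath_int n (ratio_lift h) x a b.
Proof.
move=> mh h0 c0; rewrite fbpath_int_scale -fbpath_intZ //; last 2 first.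
- exact: ratio_lift_ge0.
- exact: ltW.
congr fbpath_int; apply/funext => y; apply/funext => a'; apply/funext => b'.
rewrite /ratio_lift normrM (gtr0_norm c0) invfM mulrACA mulfV ?gt_eqF // mulr1.
by rewrite EFinM (muleC _ c%:E) muleA.
Qed.

Lemma fbpath_int_ratio_lift n h x (r : R) :
  measurable_uncurry3 (ratio_lift h) -> (forall y r, (0 <= r)%R -> 0 <= h y r) ->
  (0 <= r)%R -> fbpath_int n (ratio_lift h) x 1 r = path_int mu nu P n h x r.
Proof.
move=> mh h0; elim: n x r => [|n IH] x r r0 /=.
  by rewrite /ratio_lift normr1 mul1e divr1 ger0_norm.
apply: eq_integral => z _; apply: eq_integral => y _; rewrite mul1r.
have := P_ge0 x y z; rewrite le_eqVlt => /orP[/eqP <-|Pxy_gt0].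
  (* no forward weight: the junk ratio r * (P y x z / 0) of [path_int] is
     multiplied by 0 *)
  by rewrite mul0e fbpath_int_fwd0 // => w b; rewrite /ratio_lift normr0 mul0e.
rewrite -[X in fbpath_int _ _ _ X _]mul1r.
rewrite (_ : r * P y x z = r * (P y x z / P x y z) * P x y z)%R; last first.
  by rewrite -mulrA divfK ?lt0r_neq0.
by rewrite fbpath_int_ratio_liftM // IH // mulr_ge0 ?divr_ge0.
Qed.

Variable pi : Omega -> R.
Hypothesis measurable_pi : measurable_fun setT pi.
Hypothesis pi_ge0 : forall x, (0 <= pi x)%R.

Lemma measurable_mh_tau :
  measurable_fun setT (fun p : Omega * Omega * R => mh_tau pi p.1.1 p.1.2 p.2).
Proof.
apply: measurable_minr; first exact: measurable_cst.
apply: measurable_funM; last exact: measurable_snd.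
apply: measurable_funM.
  exact: measurableT_comp measurable_pi (measurableT_comp measurable_snd measurable_fst).
apply: (measurableT_comp (@measurable_inv R)).
exact: measurableT_comp measurable_pi (measurableT_comp measurable_fst measurable_fst).
Qed.

Lemma mh_tau_ge0_le1 x y r : (0 <= r)%R -> (0 <= mh_tau pi x y r <= 1)%R.
Proof.
move=> r0; rewrite /mh_tau ge_min lexx le_min ler01 /=.
by rewrite !mulr_ge0 ?invr_ge0.
Qed.

Definition mh_accept (B : set Omega) x y r := (mh_tau pi x y r * \1_B y)%R%:E.

Definition mh_reject x y r := (1 - mh_tau pi x y r)%R%:E.

Lemma mh_accept_ge0 B x y r : (0 <= r)%R -> 0 <= mh_accept B x y r.
Proof.
by move=> r0; case/andP: (mh_tau_ge0_le1 x y r0) => t0 _; rewrite lee_fin mulr_ge0.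
Qed.

Lemma mh_reject_ge0 x y r : (0 <= r)%R -> 0 <= mh_reject x y r.
Proof.
by move=> r0; case/andP: (mh_tau_ge0_le1 x y r0) => _ t1; rewrite lee_fin subr_ge0.
Qed.

Lemma measurable_mh_accept B : measurable B ->
  measurable_fun setT (fun p : Omega * Omega * R => mh_accept B p.1.1 p.1.2 p.2).
Proof.
move=> mB; apply/measurable_EFinP; apply: measurable_funM; first exact: measurable_mh_tau.
exact: measurableT_comp (measurable_indic mB) (measurableT_comp measurable_snd measurable_fst).
Qed.

Lemma measurable_mh_reject :
  measurable_fun setT (fun p : Omega * Omega * R => mh_reject p.1.1 p.1.2 p.2).
Proof.
apply/measurable_EFinP; apply: measurable_funB; first exact: measurable_cst.
exact: measurable_mh_tau.
Qed.

Lemma mh_kernelE n B x : measurable B ->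
  mh_kernel mu nu P pi n x B =
  fbpath_int n (ratio_lift (mh_accept B x)) x 1 1 +
  (\1_B x)%:E * fbpath_int n (ratio_lift (mh_reject x)) x 1 1.
Proof.
move=> mB.
have macc := measurable_uncurry4_at x (measurable_ratio_lift (measurable_mh_accept mB)).
have mrej := measurable_uncurry4_at x (measurable_ratio_lift measurable_mh_reject).
have acc0 := ratio_lift_ge0 (@mh_accept_ge0 B x).
have rej0 := ratio_lift_ge0 (@mh_reject_ge0 x).
have B0 : (0 <= \1_B x :> R)%R by rewrite indicE.
have mrejB : measurable_uncurry3
    (fun y a b => (\1_B x)%:E * ratio_lift (mh_reject x) y a b).
  by apply: emeasurable_funM => //; exact: measurable_cst.
have rejB0 y a b : 0 <= (\1_B x)%:E * ratio_lift (mh_reject x) y a b.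
  by rewrite mule_ge0 ?rej0 ?lee_fin.
have liftE : ratio_lift (fun y r => mh_accept B x y r + (\1_B x)%:E * mh_reject x y r) =
  fun y a b => ratio_lift (mh_accept B x) y a b +
               (\1_B x)%:E * ratio_lift (mh_reject x) y a b.
  apply/funext => y; apply/funext => a; apply/funext => b.
  by rewrite /ratio_lift /mh_accept /mh_reject -?EFinM -?EFinD -?EFinM; congr EFin; ring.
transitivity (path_int mu nu P n
    (fun y r => mh_accept B x y r + (\1_B x)%:E * mh_reject x y r) x 1).
  congr path_int; apply/funext => y; apply/funext => r.
  by rewrite /mh_accept /mh_reject -EFinM -EFinD; congr EFin; ring.
rewrite -fbpath_int_ratio_lift ?liftE //.
- by rewrite fbpath_intD // fbpath_intZ.
- exact: emeasurable_funD.
- by move=> y r r0; rewrite adde_ge0 ?mule_ge0 ?mh_accept_ge0 ?mh_reject_ge0 ?lee_fin.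
Qed.

Definition mh_flow (A B : set Omega) x y a b :=
  (\1_A x * pi x)%R%:E * ratio_lift (mh_accept B x) y a b.

Definition mh_flux n A B := \int[mu]_x fbpath_int n (mh_flow A B x) x 1 1.

Lemma mh_flow_ge0 A B x y a b : 0 <= mh_flow A B x y a b.
Proof.
apply: mule_ge0; first by rewrite lee_fin mulr_ge0 ?indicE.
exact: ratio_lift_ge0 (@mh_accept_ge0 B x) y a b.
Qed.

Lemma measurable_mh_flow A B : measurable A -> measurable B ->
  measurable_uncurry4 (mh_flow A B).
Proof.
move=> mA mB; apply: emeasurable_funM.
  apply/measurable_EFinP; apply: measurable_funM.
    by apply: measurableT_comp (measurable_indic mA) _; measurable_tac.
  by apply: measurableT_comp measurable_pi _; measurable_tac.
exact: measurable_ratio_lift (measurable_mh_accept mB).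
Qed.

Lemma integral_mh_kernel n A B : measurable A -> measurable B ->
  \int[mu]_(x in A) ((pi x)%:E * mh_kernel mu nu P pi n x B) =
  mh_flux n A B + \int[mu]_x ((\1_A x * pi x * \1_B x)%R%:E *
                              fbpath_int n (ratio_lift (mh_reject x)) x 1 1).
Proof.
move=> mA mB.
have rej0 x := ratio_lift_ge0 (@mh_reject_ge0 x).
have mrej := measurable_fbpath_int n (measurable_ratio_lift measurable_mh_reject) rej0.
have mflux := measurable_fbpath_int n (measurable_mh_flow mA mB) (@mh_flow_ge0 A B).
rewrite /mh_flux -ge0_integralD //; last 4 first.
- by move=> x _; apply: fbpath_int_ge0; exact: mh_flow_ge0.
- by apply: (measurable_uncurry4_comp mflux); measurable_tac.
- move=> x _; rewrite mule_ge0 ?lee_fin ?mulr_ge0 ?indicE //.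
  exact: fbpath_int_ge0.
- apply: emeasurable_funM; last by apply: (measurable_uncurry4_comp mrej); measurable_tac.
  apply/measurable_EFinP; apply: measurable_funM; last exact: measurable_indic mB.
  by apply: measurable_funM => //; exact: measurable_indic mA.
rewrite [LHS]integral_mkcond; apply: eq_integral => x _.
rewrite patchE mh_kernelE // /mh_flow fbpath_intZ ?mulr_ge0 ?indicE //; last 2 first.
- exact: measurable_uncurry4_at x (measurable_ratio_lift (measurable_mh_accept mB)).
- exact: ratio_lift_ge0 (@mh_accept_ge0 B x).
case: ifPn => _; last by rewrite !mul0r !mul0e adde0.
rewrite !mul1r ge0_muleDr ?muleA -?EFinM //.
  by apply: fbpath_int_ge0; exact: ratio_lift_ge0 (@mh_accept_ge0 B x).
by apply: mule_ge0; [rewrite lee_fin | exact: fbpath_int_ge0].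
Qed.

Lemma mh_fluxC n A B : measurable A -> measurable B -> mh_flux n A B = mh_flux n B A.
Proof.
move=> mA mB; rewrite /mh_flux fbpath_int_rev; last 2 first.
- exact: measurable_mh_flow.
- exact: mh_flow_ge0.
apply: eq_integral => y _; apply: eq_fbpath_int => // x a b a0 b0.
rewrite /mh_flow /ratio_lift /mh_accept -!EFinM; congr EFin.
rewrite !ger0_norm ?divr_ge0 //.
transitivity (\1_A x * \1_B y * (pi x * b * mh_tau pi x y (a / b)))%R; first by ring.
by rewrite mh_tau_balance //; ring.
Qed.

Lemma mh_detailed_balance n A B : measurable A -> measurable B ->
  \int[mu]_(x in A) ((pi x)%:E * mh_kernel mu nu P pi n x B) =
  \int[mu]_(x in B) ((pi x)%:E * mh_kernel mu nu P pi n x A).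
Proof.
move=> mA mB; rewrite !integral_mh_kernel // mh_fluxC //.
by congr (_ + _); apply: eq_integral => x _; congr (_%:E * _); ring.
Qed.

End ForwardBackwardPathIntegral.

Section ProbabilityPathIntegral.
Local Open Scope ereal_scope.
Context (R : realType) (d1 d2 : measure_display)
  (Omega : measurableType d1) (Z : measurableType d2)
  (mu : {measure set Omega -> \bar R}) (nu : probability Z R)
  (P : Omega -> Omega -> Z -> R).
Hypothesis P1 : forall x z, \int[mu]_y (P x y z)%:E = 1.

Lemma path_int_cst1 n x r : path_int mu nu P n (fun _ _ => 1) x r = 1.
Proof.
elim: n x r => [//|n IH] x r /=.
under eq_integral do under eq_integral do rewrite IH mule1.
by under eq_integral do rewrite P1; rewrite integral_cst //= mul1e probability_setT.
Qed.

Lemma mh_kernel_setT (pi : Omega -> R) n x : mh_kernel mu nu P pi n x setT = 1.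
Proof.
rewrite /mh_kernel -[RHS](path_int_cst1 n x 1%R); congr path_int.
by apply/funext => y; apply/funext => r; rewrite indicT /= !mulr1 addrC subrK.
Qed.

End ProbabilityPathIntegral.

Local Open Scope ereal_scope.

Theorem mainTheorem3 (R : realType) (d1 d2 : measure_display)
  (Omega : measurableType d1) (Z : measurableType d2)
  (mu : {measure set Omega -> \bar R}) (nu : probability Z R)
  (pi : Omega -> R) (P : Omega -> Omega -> Z -> R) (T : nat) :
  sigma_finite setT mu ->
  measurable_fun setT pi ->
  (forall x, (0 <= pi x)%R) ->
  \int[mu]_x (pi x)%:E = 1 ->
  measurable_fun setT (fun p : Omega * Omega * Z => P p.1.1 p.1.2 p.2) ->
  (forall x y z, (0 <= P x y z)%R) ->
  (forall x z, \int[mu]_y (P x y z)%:E = 1) ->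
  (1 <= T)%N ->
  (forall A B : set Omega, measurable A -> measurable B ->
     \int[mu]_(x in A) ((pi x)%:E * mh_kernel mu nu P pi T x B)
     = \int[mu]_(x in B) ((pi x)%:E * mh_kernel mu nu P pi T x A)) /\
  (forall B : set Omega, measurable B ->
     \int[mu]_x ((pi x)%:E * mh_kernel mu nu P pi T x B)
     = \int[mu]_(x in B) (pi x)%:E).
Proof.
move=> mu_sf measurable_pi pi_ge0 _ measurable_P P_ge0 P1 _.
have balance A B : measurable A -> measurable B ->
    \int[mu]_(x in A) ((pi x)%:E * mh_kernel mu nu P pi T x B) =
    \int[mu]_(x in B) ((pi x)%:E * mh_kernel mu nu P pi T x A).
  exact: (mh_detailed_balance (sigma_finite_measure_of mu_sf) nu
    measurable_P P_ge0 measurable_pi pi_ge0 T).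
split=> // B mB; rewrite (balance setT B measurableT mB).
by apply: eq_integral => x _; rewrite mh_kernel_setT // mule1.
Qed.
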